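(* Let $q$ be a prime power, and let $\pi,\sigma\in P$ with $\pi(x)=a+\frac{r}{x-i}$ and $\sigma(x)=b+\frac{s}{x-j}$ (i.e. $\pi=f_{a,r,i}$, $\sigma=f_{b,s,j}$ with $r,s\neq 0$). Then $hd(\pi^{\triangle},\sigma^{\triangle})=hd(\pi,\sigma)-3$ if and only if $r=s$ and $(b-a)(j-i)=r$.
   Context: For $K,i\in GF(q)$ and $r\in GF(q)\setminus\{0\}$, $f_{K,r,i}:GF(q)\cup\{\infty\}\to GF(q)\cup\{\infty\}$ is the permutation given by $f_{K,r,i}(x)=K+\frac{r}{x-i}$ for $x\notin\{i,\infty\}$, $f_{K,r,i}(\infty)=K$, $f_{K,r,i}(i)=\infty$; $P$ is the set of all such $f_{K,r,i}$. For permutations $\pi,\sigma$ of a finite set, $hd(\pi,\sigma)$ is the number of points at which they differ. The distinguished element is $F=\infty$: for a permutation $\pi$ of $GF(q)\cup\{\infty\}$, $\pi^{\triangle}$ is the permutation with $\pi^{\triangle}(\pi^{-1}(\infty))=\pi(\infty)$, $\pi^{\triangle}(\infty)=\infty$, and $\pi^{\triangle}(x)=\pi(x)$ otherwise. *)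

(* GF(q) is modelled by an arbitrary finite field F
   (finite fields are exactly the GF(q), q a prime power);
   GF(q) ∪ {∞} is modelled by [option F], with [None] = ∞. *)
From HB Require Import structures.
From mathcomp Require Import all_boot all_order all_algebra all_field.
Set Implicit Arguments. Unset Strict Implicit. Unset Printing Implicit Defensive.
Import GRing.Theory.
Local Open Scope ring_scope.

Definition fKri (F : finFieldType) (K r i : F) (x : option F) : option F :=
  match x with
  | None => Some K
  | Some y => if y == i then None else Some (K + r / (y - i))
  end.

Definition hd (T : finType) (p s : T -> T) : nat :=
  #|[pred x | p x != s x]|.

(* pi^triangle with distinguished element F = ∞ (None):
   pi^△(∞) = ∞, pi^△(pi^{-1}(∞)) = pi(∞), pi^△(x) = pi(x) otherwise. *)
Definition tri (F : finFieldType) (p : option F -> option F) (x : option F)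
  : option F :=
  match x with
  | None => None
  | Some _ => if p x == None then p None else p x
  end.

(** The maps [tri f] and [f] agree everywhere except at [∞] and at the pole
    of [f], so passing to [π^△], [σ^△] only changes the contributions of
    [∞], [i] and [j] to the Hamming distance.  If [i = j] nothing changes.
    If [i <> j], [π] and [σ] differ at [i] and [j], and at [∞] iff [a <> b],
    whereas [π^△], [σ^△] agree at [∞], agree at [i] iff [(b-a)(j-i) = s]
    and agree at [j] iff [(b-a)(j-i) = r]; so the distance drops by three
    exactly when both identities hold, and then [a <> b] since [r <> 0]. *)
From HB Require Import structures.
From mathcomp Require Import all_boot all_order all_algebra all_field.
From mathcomp Require Import ring zify.
Import GRing.Theory.
Set Implicit Arguments.
Unset Strict Implicit.
Unset Printing Implicit Defensive.
Local Open Scope ring_scope.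

Lemma hdE (T : finType) (p s : T -> T) : hd p s = \sum_x (p x != s x : nat).
Proof.
rewrite /hd -sum1_card big_mkcond; apply: eq_bigr => x _.
by rewrite inE; case: (_ != _).
Qed.

Lemma hd_agree_off (T : finType) (D : seq T) (p s p' s' : T -> T) :
    uniq D ->
    (forall x, x \notin D -> p x = p' x) ->
    (forall x, x \notin D -> s x = s' x) ->
  (hd p s + \sum_(x <- D) (p' x != s' x : nat)
    = hd p' s' + \sum_(x <- D) (p x != s x : nat))%N.
Proof.
move=> uD pp' ss'; rewrite !hdE !(big_uniq _ uD) !(bigID (mem D) predT) /=.
have -> : \sum_(x | x \notin D) (p x != s x : nat)
        = \sum_(x | x \notin D) (p' x != s' x : nat).
  by apply: eq_bigr => x xD; rewrite pp' ?ss'.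
by rewrite addnAC [RHS]addnC addnA.
Qed.

Section TriangleOfFKri.

Variable F : finFieldType.

Lemma tri_fKri_pole (a r i : F) : tri (fKri a r i) (Some i) = Some a.
Proof. by rewrite /= eqxx. Qed.

Lemma tri_fKriE (a r i : F) (x : option F) :
  x != None -> x != Some i -> tri (fKri a r i) x = fKri a r i x.
Proof. by case: x => // y _; rewrite /= (inj_eq Some_inj) => /negbTE ->. Qed.

Lemma add_div_eq (a b r d : F) :
  d != 0 -> (a + r / d == b) = ((b - a) * d == r).
Proof.
move=> d0; apply/eqP/eqP => [<-|<-]; by field.
Qed.

Lemma tri_fKri_off (a r i : F) (D : seq (option F)) :
    None \in D -> Some i \in D ->
  forall x, x \notin D -> fKri a r i x = tri (fKri a r i) x.
Proof.
move=> ND iD x xD; rewrite tri_fKriE //.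
  by apply: contraNneq xD => ->.
by apply: contraNneq xD => ->.
Qed.

Lemma hd_tri_fKri_same_pole (a r b s i : F) :
  hd (tri (fKri a r i)) (tri (fKri b s i)) = hd (fKri a r i) (fKri b s i).
Proof.
have iD : Some i \in [:: None; Some i] by rewrite !inE eqxx orbT.
have := hd_agree_off (isT : uniq [:: None; Some i]) (tri_fKri_off a r (mem_head _ _) iD)
  (tri_fKri_off b s (mem_head _ _) iD).
rewrite !big_cons !big_nil !tri_fKri_pole /= eqxx /=; lia.
Qed.

Lemma hd_tri_fKri_distinct_poles (a r b s i j : F) : i != j ->
  (hd (fKri a r i) (fKri b s j)
     + (((b - a) * (j - i) != s)%R + ((b - a) * (j - i) != r)%R)
   = hd (tri (fKri a r i)) (tri (fKri b s j)) + ((a != b)%R + 2))%N.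
Proof.
move=> ij; have ji : j != i by rewrite eq_sym.
pose D := [:: None; Some i; Some j].
have uD : uniq D by rewrite /= !inE (inj_eq Some_inj) ij.
have iD : Some i \in D by rewrite !inE eqxx orbT.
have jD : Some j \in D by rewrite !inE eqxx !orbT.
have := hd_agree_off uD (tri_fKri_off a r (mem_head _ _) iD)
  (tri_fKri_off b s (mem_head _ _) jD).
rewrite !big_cons !big_nil !tri_fKri_pole /= !eqxx (negbTE ij) (negbTE ji) /=.
rewrite !(inj_eq Some_inj) eq_sym add_div_eq ?subr_eq0 // add_div_eq ?subr_eq0 //.
have -> : (a - b) * (i - j) = (b - a) * (j - i) by ring.
by rewrite add0n addn0.
Qed.

End TriangleOfFKri.

Theorem lemma10 (F : finFieldType) (a r i b s j : F) :
  r != 0 -> s != 0 ->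
  ((hd (tri (fKri a r i)) (tri (fKri b s j)) + 3)%N
     = hd (fKri a r i) (fKri b s j)
   <-> r = s /\ (b - a) * (j - i) = r).
Proof.
move=> r0 _; have [<-|ij] := eqVneq i j.
  rewrite hd_tri_fKri_same_pole subrr mulr0.
  by split=> [|[_ r0']]; [lia | rewrite -r0' eqxx in r0].
have := hd_tri_fKri_distinct_poles a r b s ij.
have [<-|ab] := eqVneq a b.
  rewrite subrr mul0r (eq_sym 0 r) r0.
  by case: (0 != s) => /= H; split=> [|[_ r0']]; try lia;
    rewrite -r0' eqxx in r0.
case: eqP => [cs|ncs]; case: eqP => [cr|ncr] /= H.
- by split=> _; [rewrite -cr -cs | lia].
- by split=> [|[_ /ncr]] //; lia.
- split=> [E|[rs _]]; last by case: ncs; rewrite cr rs.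
  exfalso; lia.
- by split=> [|[_ /ncr]] //; lia.
Qed.
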